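(* For finite simple graphs $G$ and $H$ with disjoint vertex sets, $\mathrm{mur}(G)+\mathrm{mur}(H)\le\mathrm{mur}(G\cup H)$.
   Context: For a finite simple undirected graph $G$ on vertices $v_1,\dots,v_n$, let $A_G$ be its $(0,1)$-adjacency matrix, $D_G=\mathrm{diag}(d_1,\dots,d_n)$ with $d_i$ the degree of $v_i$, $I$ the $n\times n$ identity matrix and $J$ the $n\times n$ all-ones matrix. A universal adjacency matrix of $G$ is any matrix $\alpha A_G+\beta I+\gamma J+\delta D_G$ with real scalars $\alpha,\beta,\gamma,\delta$ and $\alpha\neq 0$. The minimum universal rank $\mathrm{mur}(G)$ is the minimum rank over all universal adjacency matrices of $G$. The union $G\cup H$ is the graph with vertex set $V(G)\cup V(H)$ and edge set $E(G)\cup E(H)$. *)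

From HB Require Import structures.
From mathcomp Require Import all_boot all_order all_algebra.
From mathcomp Require Import boolp reals.
Set Implicit Arguments. Unset Strict Implicit. Unset Printing Implicit Defensive.
Import Order.TTheory GRing.Theory Num.Theory.
Local Open Scope ring_scope.

Definition simple_graph (n : nat) (e : rel 'I_n) : Prop :=
  (forall i j, e i j = e j i) /\ (forall i, e i i = false).

Section Mats.
Variable R : realType.

Definition adjmx n (e : rel 'I_n) : 'M[R]_n := \matrix_(i, j) (e i j)%:R.
Definition degmx n (e : rel 'I_n) : 'M[R]_n :=
  \matrix_(i, j) ((i == j)%:R * (#|[set k | e i k]|)%:R).
Definition allones n : 'M[R]_n := const_mx 1.

Definition univmx n (e : rel 'I_n) (a b c d : R) : 'M[R]_n :=
  a *: adjmx e + b%:M + c *: allones n + d *: degmx e.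

Definition univ_rank_attained n (e : rel 'I_n) (k : nat) : Prop :=
  exists a b c d : R, a != 0 /\ \rank (univmx e a b c d) = k.

Lemma univ_rank_attained_ex n (e : rel 'I_n) :
  exists k, `[< univ_rank_attained e k >].
Proof.
exists (\rank (univmx e 1 0 0 0)); apply/asboolP.
by exists 1, 0, 0, 0; split => //; apply: oner_neq0.
Qed.

Definition mur n (e : rel 'I_n) : nat := ex_minn (univ_rank_attained_ex e).
End Mats.

(* Union of graphs on disjoint vertex sets 'I_n and 'I_m (vertex set 'I_(n+m)):
   edges are exactly those of G (on the first n vertices) and of H (on the last m). *)
Definition graph_union n m (eG : rel 'I_n) (eH : rel 'I_m) : rel 'I_(n + m) :=
  fun i j => match split i, split j with
             | inl a, inl b => eG a b
             | inr a, inr b => eH a b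
             | _, _ => false
             end.

(* Take a universal adjacency matrix of G ∪ H of minimum rank and write it as
   diag(P, Q) + c J, where P and Q are universal adjacency matrices of G and H
   without J-term.  Adding c J changes the rank by at most one, so
   rank P + rank Q exceeds that minimum by at most one, and only if some left
   kernel vector u of diag(P, Q) + c J has nonzero coordinate sum.  In that
   case a half v of u with nonzero coordinate sum satisfies v P = k J with
   k != 0 (or the same for Q), and shifting P by a suitable multiple of J
   strictly lowers its rank, which pays for the defect. *)

From HB Require Import structures.
From mathcomp Require Import all_boot all_order all_algebra zify.
From mathcomp Require Import boolp reals.
Set Implicit Arguments. Unset Strict Implicit. Unset Printing Implicit Defensive.
Import Order.TTheory GRing.Theory Num.Theory.
Local Open Scope ring_scope.

Local Notation J := (const_mx 1).

Section RankOfConstantShifts.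
Variable F : fieldType.

Definition rowsum p (u : 'rV[F]_p) : F := \sum_j u 0 j.

Lemma mulmx_const1 p q (u : 'rV[F]_p) : u *m (J : 'M_(p, q)) = rowsum u *: J.
Proof.
apply/matrixP => i k; rewrite (ord1 i) !mxE mulr1; apply: eq_bigr => j _.
by rewrite mxE mulr1.
Qed.

Lemma rowsum_hsub p q (u : 'rV[F]_(p + q)) :
  rowsum u = rowsum (lsubmx u) + rowsum (rsubmx u).
Proof.
by rewrite /rowsum big_split_ord /=; congr (_ + _); apply: eq_bigr => j _; rewrite mxE.
Qed.

Lemma mxrank_const1 p : (\rank (J : 'M[F]_p) <= 1)%N.
Proof.
have -> : (J : 'M[F]_p) = (J : 'cV_p) *m (J : 'rV_p).
  by apply/matrixP => i j; rewrite !mxE big_ord1 !mxE mulr1.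
exact: leq_trans (mxrankM_maxl _ _) (rank_leq_col _).
Qed.

Lemma mxrank_addJ p (A : 'M[F]_p) (c : F) : (\rank A <= \rank (A + c *: J)%R + 1)%N.
Proof.
rewrite -{1}[A](addrK (c *: J)) -scaleNr.
apply: leq_trans (mxrank_add _ _) _; rewrite leq_add2l.
exact: leq_trans (mxrank_scale _ _) (mxrank_const1 _).
Qed.

Lemma mxrank_kerS m n (A B : 'M[F]_(m, n)) :
  (kermx A <= kermx B)%MS -> (\rank B <= \rank A)%N.
Proof.
move/mxrankS; rewrite !mxrank_ker.
by have := rank_leq_row A; have := rank_leq_row B; lia.
Qed.

Lemma mxrank_ker_ltmx m n (A B : 'M[F]_(m, n)) :
  (kermx A < kermx B)%MS -> (\rank B < \rank A)%N.
Proof.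
rewrite ltmxErank => /andP[_]; rewrite !mxrank_ker.
by have := rank_leq_row A; have := rank_leq_row B; lia.
Qed.

(* The shift is chosen to put [v] into the kernel; no kernel vector of [P] is
   lost because, [P] being symmetric, each is orthogonal to [J = k^-1 v P]. *)
Lemma mxrank_addJ_lt p (P : 'M[F]_p) (v : 'rV_p) (k : F) :
  P^T = P -> k != 0 -> v *m P = k *: J -> rowsum v != 0 ->
  exists c, (\rank (P + c *: J)%R < \rank P)%N.
Proof.
move=> symP k_neq0 vP sv_neq0; exists (- k / rowsum v).
apply: mxrank_ker_ltmx; rewrite ltmxE; apply/andP; split.
  apply/rV_subP => w; rewrite !sub_kermx => /eqP wP.
  have : (w *m (J : 'M_(p, 1))) 0 0 = 0.
    rewrite -trmx_const -[J in J^T](scalerK k_neq0) -vP.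
    rewrite linearZ /= trmx_mul symP.
    by rewrite -scalemxAr mulmxA wP mul0mx scaler0 mxE.
  rewrite mulmx_const1 !mxE mulr1 => sw0.
  by rewrite mulmxDr wP -scalemxAr mulmx_const1 sw0 !scale0r scaler0 addr0.
have vK : (v <= kermx (P + (- k / rowsum v) *: J)%R)%MS.
  rewrite sub_kermx mulmxDr vP -scalemxAr mulmx_const1 scalerA -scalerDl.
  by rewrite mulrAC -mulrA mulfV // mulr1 addrN scale0r.
apply/negP => /(submx_trans vK); rewrite sub_kermx vP scaler_eq0 (negPf k_neq0) /=.
move=> /eqP /matrixP J0; move/eqP: sv_neq0; apply; rewrite /rowsum big1 // => j _.
by have := J0 0 j; rewrite !mxE => /eqP; rewrite oner_eq0.
Qed.

Lemma mulmx_diag_addJ p q (P : 'M[F]_p) (Q : 'M[F]_q) (g : F) (u : 'rV_(p + q)) :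
  u *m (block_mx P 0 0 Q + g *: J) = 0 ->
  lsubmx u *m P = - (g * rowsum u) *: J /\ rsubmx u *m Q = - (g * rowsum u) *: J.
Proof.
rewrite mulmxDr -scalemxAr mulmx_const1 -{1}(hsubmxK u) mul_row_block.
rewrite !mulmx0 addr0 add0r scalerA -row_mx_const scale_row_mx add_row_mx.
move/eqP; rewrite row_mx_eq0 => /andP[uP uQ].
by rewrite !scaleNr; split; apply/eqP; rewrite -addr_eq0.
Qed.

Lemma mxrank_diag_addJ p q (P : 'M[F]_p) (Q : 'M[F]_q) (g : F) :
  P^T = P -> Q^T = Q ->
  exists c1 c2 : F, (\rank (P + c1 *: J)%R + \rank (Q + c2 *: J)%R
                     <= \rank (block_mx P 0 0 Q + g *: J)%R)%N.
Proof.
move=> symP symQ; set D := block_mx P 0 0 Q; set M := (D + g *: J)%R.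
have rankD : \rank D = (\rank P + \rank Q)%N by rewrite rank_diag_block_mx.
have rankDM : (\rank D <= \rank M + 1)%N by apply: mxrank_addJ.
have no_shift : (\rank D <= \rank M)%N -> exists c1 c2 : F,
    (\rank (P + c1 *: J)%R + \rank (Q + c2 *: J)%R <= \rank M)%N.
  by exists 0, 0; rewrite !scale0r !addr0 -rankD.
have [g0 | g_neq0] := eqVneq g 0; first by apply: no_shift; rewrite /M g0 scale0r addr0.
have [/existsP [i su_neq0] | /existsPn rowsum_ker0] :=
  boolP [exists i, rowsum (row i (kermx M)) != 0].
  set u := row i (kermx M) in su_neq0.
  have uM : u *m M = 0 by apply/eqP; rewrite -sub_kermx row_sub.
  have [uP uQ] := mulmx_diag_addJ uM.
  have k_neq0 : - (g * rowsum u) != 0 by rewrite oppr_eq0 mulf_neq0.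
  have [su1_0 | su1_neq0] := eqVneq (rowsum (lsubmx u)) 0.
    have su2_neq0 : rowsum (rsubmx u) != 0 by rewrite rowsum_hsub su1_0 add0r in su_neq0.
    have [c rank_lt] := mxrank_addJ_lt symQ k_neq0 uQ su2_neq0.
    by exists 0, c; rewrite scale0r addr0; move: rankD rankDM rank_lt; lia.
  have [c rank_lt] := mxrank_addJ_lt symP k_neq0 uP su1_neq0.
  by exists c, 0; rewrite scale0r addr0; move: rankD rankDM rank_lt; lia.
apply: no_shift; apply: mxrank_kerS; rewrite sub_kermx.
rewrite -[D](addrK (g *: J)) -/M mulmxBr mulmx_ker sub0r oppr_eq0 -scalemxAr.
rewrite scaler_eq0 (negPf g_neq0) /=.
apply/eqP/row_matrixP => i; rewrite row0 row_mul mulmx_const1.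
by move/negPn/eqP: (rowsum_ker0 i) => ->; rewrite !scale0r.
Qed.
End RankOfConstantShifts.

Section UniversalAdjacency.
Variable R : realType.

Lemma univmx_shift n (e : rel 'I_n) (a b c d : R) :
  univmx e a b c d = univmx e a b 0 d + c *: J.
Proof. by rewrite /univmx /allones scale0r addr0 addrAC. Qed.

Lemma univmx_tr n (e : rel 'I_n) (a b c d : R) :
  simple_graph e -> (univmx e a b c d)^T = univmx e a b c d.
Proof.
move=> [sym_e _]; apply/matrixP => i j; rewrite !mxE sym_e eq_sym.
by have [->|] := eqVneq j i; rewrite ?mul0r.
Qed.

Lemma split_lshift n m (i : 'I_n) : split (lshift m i) = inl i.
Proof. exact: (unsplitK (inl _ i)). Qed.

Lemma split_rshift n m (i : 'I_m) : split (rshift n i) = inr i.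
Proof. exact: (unsplitK (inr _ i)). Qed.

Lemma graph_union_nbhd_lshift n m (eG : rel 'I_n) (eH : rel 'I_m) (i : 'I_n) :
  [set k | graph_union eG eH (lshift m i) k] = lshift m @: [set k | eG i k].
Proof.
apply/setP => k; rewrite inE /graph_union split_lshift.
case: (split_ordP k) => k' ->; first by rewrite mem_imset ?inE //; exact: lshift_inj.
by apply/esym/imsetP => -[x _ /eqP]; rewrite eq_sym eq_lrshift.
Qed.

Lemma graph_union_nbhd_rshift n m (eG : rel 'I_n) (eH : rel 'I_m) (i : 'I_m) :
  [set k | graph_union eG eH (rshift n i) k] = @rshift n m @: [set k | eH i k].
Proof.
apply/setP => k; rewrite inE /graph_union split_rshift.
case: (split_ordP k) => k' ->; last by rewrite mem_imset ?inE //; exact: rshift_inj.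
by apply/esym/imsetP => -[x _ /eqP]; rewrite eq_sym eq_rlshift.
Qed.

Lemma univmx_graph_union n m (eG : rel 'I_n) (eH : rel 'I_m) (a b c d : R) :
  univmx (graph_union eG eH) a b c d =
  block_mx (univmx eG a b 0 d) 0 0 (univmx eH a b 0 d) + c *: J.
Proof.
rewrite univmx_shift; congr (_ + _); apply/matrixP => i j.
case: (split_ordP i) => i' ->; case: (split_ordP j) => j' ->;
  rewrite ?block_mxEul ?block_mxEur ?block_mxEdl ?block_mxEdr !mxE
    ?graph_union_nbhd_lshift ?graph_union_nbhd_rshift ?card_imset;
  try solve [exact: lshift_inj | exact: rshift_inj].
all: rewrite /graph_union ?split_lshift ?split_rshift ?eq_lrshift ?eq_rlshift
  ?(inj_eq (@lshift_inj _ _)) ?(inj_eq (@rshift_inj _ _)) //=.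
all: by rewrite !mul0r !mulr0 !addr0.
Qed.

Lemma mur_le n (e : rel 'I_n) k : univ_rank_attained R e k -> (mur R e <= k)%N.
Proof. by rewrite /mur; case: ex_minnP => r _ r_min /asboolP; apply: r_min. Qed.

Lemma mur_attained n (e : rel 'I_n) : univ_rank_attained R e (mur R e).
Proof. by rewrite /mur; case: ex_minnP => r /asboolP. Qed.
End UniversalAdjacency.

Theorem lemma13 (R : realType) (n m : nat) (eG : rel 'I_n) (eH : rel 'I_m) :
  simple_graph eG -> simple_graph eH ->
  (mur R eG + mur R eH <= mur R (graph_union eG eH))%N.
Proof.
move=> simpleG simpleH.
have [a [b [c [d [a_neq0 <-]]]]] := mur_attained R (graph_union eG eH).
have [c1 [c2 le_rank]] := mxrank_diag_addJ c (univmx_tr a b 0 d simpleG)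
                                             (univmx_tr a b 0 d simpleH).
rewrite univmx_graph_union; apply: leq_trans le_rank.
apply: leq_add; apply: mur_le; [exists a, b, c1, d | exists a, b, c2, d];
  by rewrite univmx_shift.
Qed.
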